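(* Let $n$ be a positive integer, $k\ge2$ an integer, and $\beta$ an integer with $0\le\beta\le k-1$. Then $$\det_{0\le i,j\le n-1}\bigl(C_{(k-1)i+j+\beta,k}+C_{(k-1)i+j+\beta+1,k}\bigr)=\sum_{s=0}^{n}\binom{\lfloor\frac{s+\beta}{k-1}\rfloor+n}{n-s}.$$
   Context: For integers $k\ge2$ and $m\ge0$, the generalised Catalan number is $$C_{m,k}=\frac{m-(k-1)\lfloor\frac{m}{k-1}\rfloor+1}{m+\lfloor\frac{m}{k-1}\rfloor+1}\binom{m+\lfloor\frac{m}{k-1}\rfloor+1}{m+1}.$$ *)

From mathcomp Require Import all_boot all_order all_algebra.
Set Implicit Arguments. Unset Strict Implicit. Unset Printing Implicit Defensive.
Import Order.TTheory GRing.Theory Num.Theory.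
Local Open Scope ring_scope.

Definition genCat (m k : nat) : rat :=
  let q := (m %/ (k.-1))%N in
  ((m - k.-1 * q).+1)%:R / ((m + q).+1)%:R * ('C((m + q).+1, m.+1))%:R.

From mathcomp Require Import all_boot all_order all_algebra.
From mathcomp Require Import ring zify.
Import Order.TTheory GRing.Theory Num.Theory.
Local Open Scope ring_scope.

(* For 0 <= b <= k-1, genCat ((k-1) i + b) k is the Raney number
   R_{k,b+1}(i) = (b+1)/(ki+b+1) * C(ki+b+1, i), and Raney numbers satisfy
   R_{k,r+k}(n) = R_{k,r+1}(n+1) - R_{k,r}(n+1).  Together with Pascal's rule
   this shows, by induction on n, that the column
   g = ((-1)^s C(floor((s+b)/(k-1)) + n, n-s))_{s <= n} is annihilated by the
   first n rows of H = (genCat ((k-1) i + j + b) k)_{i, j}, while row n of H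
   gives (-1)^n.  Bordering the first n rows of H by a last row r and
   multiplying by [1 g_top; 0 g_last] gives det [H_top; r] * (-1)^n =
   det H_n * (r g).  With r = row n of H this yields det H_{n+1} = det H_n = 1;
   with r = ((-1)^j)_j we get r g = the binomial sum.  Finally, right
   multiplication by the bidiagonal matrix with ones on and just below the
   diagonal adds to each column its successor, turning [H_top; ((-1)^j)]
   into a block triangular matrix with diagonal blocks the target matrix
   and (-1)^n. *)

Definition raney (p r n : nat) : rat :=
  r%:R / (p * n + r)%:R * 'C(p * n + r, n)%:R.

Lemma raney0 p r : (0 < r)%N -> raney p r 0 = 1.
Proof.
by move=> r_gt0; rewrite /raney muln0 add0n bin0 mulr1 divff // pnatr_eq0 -lt0n.
Qed.

Lemma natr_binSS (N j : nat) :
  'C(N.+1, j.+1)%:R = N.+1%:R * 'C(N, j)%:R / j.+1%:R :> rat.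
Proof. by rewrite -natrM mul_bin_diag natrM mulrC mulKf ?pnatr_eq0. Qed.

Lemma natr_binS (N j : nat) : (j <= N)%N ->
  'C(N, j.+1)%:R = (N%:R - j%:R) * 'C(N, j)%:R / j.+1%:R :> rat.
Proof.
by move=> le_jN; rewrite -natrB // -natrM -mul_bin_left natrM mulrC mulKf ?pnatr_eq0.
Qed.

Lemma raneyS p r n : (0 < p)%N ->
  raney p (r + p) n = raney p r.+1 n.+1 - raney p r n.+1.
Proof.
move=> p_gt0; rewrite /raney.
set N := (p * n.+1 + r)%N.
have -> : (p * n + (r + p) = N)%N by rewrite /N mulnS; lia.
have -> : (p * n.+1 + r.+1 = N.+1)%N by rewrite /N; lia.
rewrite natr_binSS natr_binS; last by rewrite /N mulnS; nia.
have N_def : N%:R = p%:R * (n%:R + 1) + r%:R :> rat.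
  by rewrite /N natrD natrM -natr1.
have N_neq0 : N%:R != 0 :> rat by rewrite pnatr_eq0 /N; lia.
have N1_neq0 : N.+1%:R != 0 :> rat by rewrite pnatr_eq0.
have n1_neq0 : n.+1%:R != 0 :> rat by rewrite pnatr_eq0.
rewrite -!natr1 in N1_neq0 n1_neq0 *; rewrite natrD.
move: N_neq0 N1_neq0; rewrite N_def => N_neq0 N1_neq0.
by clearbody N; field; rewrite N_neq0 N1_neq0 n1_neq0.
Qed.

Lemma raney_r0 p n : raney p 0 n = 0.
Proof. by rewrite /raney !mul0r. Qed.

Lemma genCat_raney_lt k q c : (c < k - 1)%N ->
  genCat ((k - 1) * q + c) k = raney k c.+1 q.
Proof.
move=> lt_c_k1; rewrite /genCat /raney -subn1 addnS.
have -> : (((k - 1) * q + c) %/ (k - 1) = q)%N.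
  by rewrite mulnC divnMDl ?divn_small ?addn0 //; lia.
have k_q : ((k - 1) * q + c + q = k * q + c)%N.
  by rewrite addnAC -mulSnr subn1 prednK //; lia.
have -> : (((k - 1) * q + c).+1 = (k * q + c).+1 - q)%N.
  by rewrite -k_q subSn ?leq_addl // addnK.
by rewrite k_q addKn bin_sub // ltnW // ltnS -k_q leq_addl.
Qed.

Lemma genCat_raney k i b : (1 < k)%N -> (b <= k - 1)%N ->
  genCat ((k - 1) * i + b) k = raney k b.+1 i.
Proof.
move=> k_gt1; rewrite leq_eqVlt => /orP[/eqP-> | ]; last exact: genCat_raney_lt.
have -> : ((k - 1) * i + (k - 1) = (k - 1) * i.+1 + 0)%N by rewrite mulnS addn0 addnC.
rewrite genCat_raney_lt; last by lia.
rewrite subn1 prednK ?(ltnW k_gt1) //.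
by rewrite -[raney k k i]/(raney k (0 + k) i) raneyS ?raney_r0 ?subr0 // ltnW.
Qed.

Section AlternatingSums.

Variable k : nat.
Hypothesis k_gt1 : (1 < k)%N.

Definition alt_binom (n b s : nat) : rat :=
  (-1) ^+ s * 'C((s + b) %/ (k - 1) + n, n - s)%:R.

Definition alt_sum (n i b : nat) : rat :=
  \sum_(0 <= s < n.+1) genCat ((k - 1) * i + s + b) k * alt_binom n b s.

Definition alt_sum_closed (n i b : nat) : rat :=
  if (i < n)%N then 0 else (-1) ^+ n * raney k (k * n + b).+1 (i - n).

Let k_gt0 : (0 < k)%N. Proof. exact: ltnW. Qed.

Lemma alt_sum_closedS n i b :
  alt_sum_closed n.+1 i b = alt_sum_closed n i b - alt_sum_closed n i b.+1.
Proof.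
rewrite /alt_sum_closed; case: (ltngtP i n) => [lt_in | lt_ni | ->].
- by rewrite ltnS ltnW // subrr.
- have [j ->] : exists j, i = (n.+1 + j)%N by exists (i - n.+1)%N; lia.
  rewrite !ifF; try by apply/negbTE; rewrite -leqNgt; lia.
  have -> : (n.+1 + j - n.+1 = j)%N by lia.
  have -> : (n.+1 + j - n = j.+1)%N by lia.
  have -> : ((k * n.+1 + b).+1 = (k * n + b).+1 + k)%N by rewrite mulnS; lia.
  by rewrite raneyS // exprS mulN1r -addnS; ring.
- by rewrite ltnSn subnn !raney0 // subrr.
Qed.

Lemma alt_sum_closedS_wrap n i :
  alt_sum_closed n.+1 i (k - 1) =
  alt_sum_closed n.+1 i.+1 0 + alt_sum_closed n i (k - 1).
Proof.
have k1_k : ((k * n + (k - 1)).+1 = k * n.+1)%N by rewrite mulnS; lia.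
rewrite /alt_sum_closed; case: (ltngtP i n) => [lt_in | lt_ni | ->].
- by rewrite ltnS ltnW // ltnS lt_in addr0.
- have [j ->] : exists j, i = (n.+1 + j)%N by exists (i - n.+1)%N; lia.
  rewrite !ifF; try by apply/negbTE; rewrite -leqNgt; lia.
  have -> : (n.+1 + j - n.+1 = j)%N by lia.
  have -> : ((n.+1 + j).+1 - n.+1 = j.+1)%N by lia.
  have -> : (n.+1 + j - n = j.+1)%N by lia.
  have -> : ((k * n.+1 + (k - 1)).+1 = k * n.+1 + k)%N by lia.
  by rewrite raneyS // k1_k addn0 exprS mulN1r; ring.
- rewrite ltnSn ltnn !subnn k1_k !raney0 ?muln_gt0 ?k_gt0 // exprS; ring.
Qed.

Lemma alt_sumS n i b : (b < k - 1)%N ->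
  alt_sum n.+1 i b = alt_sum n i b - alt_sum n i b.+1.
Proof.
move=> lt_b_k1; rewrite /alt_sum big_nat_recr //=.
pose f s := genCat ((k - 1) * i + s + b) k.
pose h s := f s * ((-1) ^+ s * 'C((s + b) %/ (k - 1) + n, n.+1 - s)%:R).
have pascal : \sum_(0 <= s < n.+1) f s * alt_binom n.+1 b s =
    \sum_(0 <= s < n.+1) f s * alt_binom n b s + \sum_(0 <= s < n.+1) h s.
  rewrite -big_split; apply: eq_big_nat => s /andP[_ le_sn] /=.
  by rewrite /alt_binom /h subSn // addnS binS natrD; ring.
have h_top : f n.+1 * alt_binom n.+1 b n.+1 = h n.+1.
  by rewrite /h /alt_binom !subnn !bin0.
rewrite pascal h_top -addrA -big_nat_recr // big_nat_recl //.
have -> : h 0%N = 0 by rewrite /h divn_small // bin_small ?mul0r ?mulr0.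
rewrite /= add0r -sumrN; congr (_ + _); apply: eq_big_nat => s _.
by rewrite /h /f /alt_binom subSS exprS mulN1r -!addnA !addSnnS; ring.
Qed.

Lemma alt_sumS_wrap n i :
  alt_sum n.+1 i (k - 1) = alt_sum n.+1 i.+1 0 + alt_sum n i (k - 1).
Proof.
have k1_gt0 : (0 < k - 1)%N by rewrite subn_gt0.
have shift_div s : ((s + (k - 1)) %/ (k - 1) = (s %/ (k - 1)).+1)%N.
  by rewrite divnDr ?dvdnn // divnn k1_gt0 addn1.
have shift_row s : ((k - 1) * i + s + (k - 1) = (k - 1) * i.+1 + s + 0)%N.
  by rewrite mulnS addn0; lia.
rewrite /alt_sum big_nat_recr // [X in _ = X + _]big_nat_recr //=.
have top_eq :
    genCat ((k - 1) * i + n.+1 + (k - 1)) k * alt_binom n.+1 (k - 1) n.+1 =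
    genCat ((k - 1) * i.+1 + n.+1 + 0) k * alt_binom n.+1 0 n.+1.
  by rewrite shift_row /alt_binom !subnn !bin0.
rewrite top_eq addrAC; congr (_ + _).
rewrite -big_split; apply: eq_big_nat => s /andP[_ le_sn] /=.
rewrite /alt_binom shift_div shift_row !addn0 subSn // addSn binS natrD.
by rewrite -addSnnS; ring.
Qed.

Lemma alt_sumE n i b : (b <= k - 1)%N -> alt_sum n i b = alt_sum_closed n i b.
Proof.
elim: n i b => [|n IHn] i b le_b_k1.
  rewrite /alt_sum /alt_sum_closed big_nat1 /alt_binom !subn0 bin0 !expr0 !mulr1.
  by rewrite mul1r muln0 addn0 genCat_raney.
have step_lt i' b' :
    (b' < k - 1)%N -> alt_sum n.+1 i' b' = alt_sum_closed n.+1 i' b'.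
  by move=> lt_b'; rewrite alt_sumS // alt_sum_closedS !IHn // ltnW.
move: le_b_k1; rewrite leq_eqVlt => /orP[/eqP-> | ]; last exact: step_lt.
by rewrite alt_sumS_wrap alt_sum_closedS_wrap step_lt ?IHn ?subn_gt0.
Qed.

End AlternatingSums.

Lemma det_col_mx_kernel (R : comPzRingType) n (A : 'M[R]_(n, n + 1))
    (r : 'rV[R]_(n + 1)) (g : 'cV[R]_(n + 1)) :
  A *m g = 0 ->
  \det (col_mx A r) * g (rshift n ord0) ord0 =
  \det (lsubmx A) * (r *m g) ord0 ord0.
Proof.
move=> Ag0.
have AgE : lsubmx A *m usubmx g + rsubmx A *m dsubmx g = A *m g.
  by rewrite -mul_row_col hsubmxK vsubmxK.
have rgE : lsubmx r *m usubmx g + rsubmx r *m dsubmx g = r *m g.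
  by rewrite -mul_row_col hsubmxK vsubmxK.
have block_prod : col_mx A r *m block_mx 1%:M (usubmx g) 0 (dsubmx g) =
                  block_mx (lsubmx A) 0 (lsubmx r) (r *m g).
  rewrite -[A]hsubmxK -[r]hsubmxK -block_mxEv mulmx_block !hsubmxK.
  by rewrite !mulmx1 !mulmx0 !addr0 AgE rgE Ag0.
have := congr1 determinant block_prod.
by rewrite det_mulmx det_ublock det_lblock det1 mul1r !det_mx11 mxE.
Qed.

Definition bidiag_mx (R : pzRingType) n : 'M[R]_n :=
  \matrix_(x, j) ((x == j :> nat) || (x == j.+1 :> nat))%:R.

Lemma det_bidiag_mx (R : comPzRingType) n : \det (bidiag_mx R n) = 1.
Proof.
rewrite det_trig; last first.
  apply/is_trig_mxP => i j lt_ij; rewrite !mxE.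
  by rewrite (ltn_eqF lt_ij) (ltn_eqF (ltn_trans lt_ij (ltnSn j))).
by apply: big1 => i _; rewrite !mxE eqxx.
Qed.

Lemma sum_mul_delta (R : pzRingType) n (f : nat -> R) p :
  \sum_(x < n) f x * (x == p :> nat)%:R = if (p < n)%N then f p else 0.
Proof.
transitivity (\sum_(x < n | x == p :> nat) f x); last exact: big_ord1_eq.
rewrite [RHS]big_mkcond; apply: eq_bigr => x _.
by case: eqP; rewrite ?mulr1 ?mulr0.
Qed.

Lemma mulmx_bidiag_mx (R : pzRingType) m n (A : 'M[R]_(m, n)) (f : nat -> R)
    i j :
  (forall x : 'I_n, A i x = f x) ->
  (A *m bidiag_mx R n) i j = f j + (if (j.+1 < n)%N then f j.+1 else 0).
Proof.
move=> Af; have -> : f j = if (j < n)%N then f j else 0 by rewrite ltn_ord.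
rewrite mxE -!sum_mul_delta -big_split.
apply: eq_bigr => x _ /=; rewrite !mxE Af -mulrDr.
by case: (eqVneq (x : nat) j) => [->|_]; rewrite ?(ltn_eqF (ltnSn j)) ?addr0 ?add0r.
Qed.

Section CatalanMatrices.

Variables k b : nat.
Hypotheses (k_gt1 : (1 < k)%N) (le_b_k1 : (b <= k - 1)%N).

Definition cat_mx m n : 'M[rat]_(m, n) :=
  \matrix_(i, j) genCat ((k - 1) * i + j + b) k.

Definition cat_row m : 'rV[rat]_(m + 1) := \row_j genCat ((k - 1) * m + j + b) k.

Definition alt_col n : 'cV[rat]_(n + 1) := \col_s alt_binom k n b s.

Lemma mulmx_alt_col m n (A : 'M[rat]_(m, n + 1)) (f : nat -> rat) i :
  (forall j : 'I_(n + 1), A i j = f j) ->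
  (A *m alt_col n) i ord0 = \sum_(0 <= s < n.+1) f s * alt_binom k n b s.
Proof.
move=> Af; rewrite mxE (eq_bigr (fun s : 'I_(n + 1) => f s * alt_binom k n b s)).
  by rewrite -(big_mkord xpredT (fun s => f s * alt_binom k n b s)) addn1.
by move=> s _; rewrite Af mxE.
Qed.

Lemma alt_col_last n : alt_col n (rshift n ord0) ord0 = (-1) ^+ n.
Proof. by rewrite mxE /alt_binom /= addn0 subnn bin0 mulr1. Qed.

Lemma cat_mx_alt_col n : cat_mx n (n + 1) *m alt_col n = 0.
Proof.
apply/matrixP => i j; rewrite [j]ord1.
rewrite (@mulmx_alt_col _ _ _ (fun s => genCat ((k - 1) * i + s + b) k)) => [|s].
  by rewrite -/(alt_sum k n i b) alt_sumE // /alt_sum_closed ltn_ord mxE.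
by rewrite mxE.
Qed.

Lemma cat_mx_succ m :
  cat_mx (m + 1) (m + 1) = col_mx (cat_mx m (m + 1)) (cat_row m).
Proof.
apply/matrixP => i j; rewrite !mxE.
by case: splitP => i' ->; rewrite !mxE // [i']ord1 addn0.
Qed.

Lemma lsubmx_cat_mx m : lsubmx (cat_mx m (m + 1)) = cat_mx m m.
Proof. by apply/matrixP => i j; rewrite !mxE. Qed.

Lemma det_cat_mx m : \det (cat_mx m m) = 1.
Proof.
elim: m => [|m IHm]; first by rewrite det_mx00.
have last_row : (cat_row m *m alt_col m) ord0 ord0 = (-1) ^+ m.
  rewrite (@mulmx_alt_col _ _ _ (fun s => genCat ((k - 1) * m + s + b) k)) => [|s].
    by rewrite -/(alt_sum k m m b) alt_sumE // /alt_sum_closed ltnn subnn raney0 // mulr1.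
  by rewrite mxE.
have := @det_col_mx_kernel _ _ _ (cat_row m) _ (cat_mx_alt_col m).
rewrite -cat_mx_succ lsubmx_cat_mx IHm alt_col_last last_row mul1r addn1.
move=> prod_eq; apply: (@mulIf _ ((-1) ^+ m)); first by rewrite signr_eq0.
by rewrite prod_eq mul1r.
Qed.

Definition cat_sign_mx n : 'M[rat]_(n + 1) :=
  col_mx (cat_mx n (n + 1)) (\row_j (-1) ^+ j).

Definition cat_sum_mx n : 'M[rat]_n :=
  \matrix_(i, j)
    (genCat ((k - 1) * i + j + b) k + genCat ((k - 1) * i + j + b + 1) k).

Lemma det_cat_sign_mx n :
  \det (cat_sign_mx n) * (-1) ^+ n =
  (\sum_(0 <= s < n.+1) 'C((s + b) %/ (k - 1) + n, n - s))%:R.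
Proof.
rewrite -(alt_col_last n) det_col_mx_kernel ?cat_mx_alt_col //.
rewrite lsubmx_cat_mx det_cat_mx mul1r.
rewrite (@mulmx_alt_col _ _ _ (fun s => (-1) ^+ s)) => [|s]; last by rewrite mxE.
rewrite natr_sum; apply: eq_bigr => s _.
by rewrite /alt_binom signrMK.
Qed.

Lemma det_cat_sign_mx_bidiag n :
  \det (cat_sign_mx n *m bidiag_mx rat (n + 1)) = \det (cat_sum_mx n) * (-1) ^+ n.
Proof.
set P := cat_sign_mx n *m _.
have ulP : ulsubmx P = cat_sum_mx n.
  apply/matrixP => i j; rewrite 2![LHS]mxE /P.
  rewrite (@mulmx_bidiag_mx _ _ _ _ (fun s => genCat ((k - 1) * i + s + b) k)) => [|s].
    by rewrite /= addn1 ltnS ltn_ord mxE addn1 addnS.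
  by rewrite col_mxEu mxE.
have dlP : dlsubmx P = 0.
  apply/matrixP => i j; rewrite 2![LHS]mxE /P.
  rewrite (@mulmx_bidiag_mx _ _ _ _ (fun s => (-1) ^+ s)) => [|s].
    by rewrite /= addn1 ltnS ltn_ord exprS mulN1r addrN mxE.
  by rewrite col_mxEd mxE.
have drP : drsubmx P ord0 ord0 = (-1) ^+ n.
  rewrite 2!mxE /P (@mulmx_bidiag_mx _ _ _ _ (fun s => (-1) ^+ s)) => [|s].
    by rewrite /= addn0 addn1 ltnn addr0.
  by rewrite col_mxEd mxE.
by rewrite -[P]submxK ulP dlP det_ublock det_mx11 drP.
Qed.

Lemma det_cat_sum_mx n :
  \det (cat_sum_mx n) =
  (\sum_(0 <= s < n.+1) 'C((s + b) %/ (k - 1) + n, n - s))%:R.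
Proof.
have := det_cat_sign_mx_bidiag n.
rewrite det_mulmx det_bidiag_mx mulr1 => det_sign_mx.
by rewrite -det_cat_sign_mx det_sign_mx -mulrA -expr2 sqrr_sign mulr1.
Qed.

End CatalanMatrices.

Theorem theorem9 (n k beta : nat) (hn : (0 < n)%N) (hk : (2 <= k)%N)
  (hbeta : (beta <= k - 1)%N) :
  \det (\matrix_(i < n, j < n)
          (genCat ((k - 1) * i + j + beta)%N k
           + genCat ((k - 1) * i + j + beta + 1)%N k))
  = (\sum_(0 <= s < n.+1)
       'C(((s + beta) %/ (k - 1)) + n, n - s))%:R.
Proof. exact: (det_cat_sum_mx _ _ hk hbeta). Qed.
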